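(* Let $x$ be a real number. The number of primes $p$ for which $P^+(p^2-1)\le x$ is at most $3\cdot 7^{1+2\pi(x)}$.
   Context: $P^+(n)$ denotes the largest prime divisor of an integer $n\ge 2$ (with $P^+(1)=1$), and $\pi(x)$ is the number of primes not exceeding $x$. *)

From Stdlib Require Import Reals ZArith.
From mathcomp Require Import all_boot.

(* largest prime divisor P^+(n); max_pdiv 1 = 1 matching P^+(1) = 1 *)
Definition largest_pdiv (n : nat) : nat := max_pdiv n.

(* floor of a real: up x is the unique integer with x < up x <= x + 1 *)
Definition rfloor (x : R) : Z := (up x - 1)%Z.

Definition primepi (x : R) : nat :=
  count prime (iota 0 (Z.to_nat (rfloor x)).+1).

From Stdlib Require Import Reals ZArith Lia.
From mathcomp Require Import all_boot zify.

(* Write p^2 - 1 = D Y^2, where for every prime r the exponent of r in D is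
   v_r(p^2 - 1) if that is at most 1, and 2 or 3 (matching its parity)
   otherwise. Then (p, Y) solves the Pell equation X^2 - D Y^2 = 1, and every
   prime factor of Y divides D to the second power. The positive solutions of
   a Pell equation are the powers of a single one, and no proper power g^k
   (k > 1) has this property: for a prime q dividing k and g^(k/q) = U + V sqrt D,
   the Y-part of (U + V sqrt D)^q is V c with c = q U^(q-1) + D b; every prime
   factor of c divides D, hence not U, hence equals q, so q^2 | D and c would be
   a power of q larger than q yet not divisible by q^2. Hence p is determined by
   D, and D by the exponents v_r(D) < 4 at the primes r <= x, which leaves at
   most 4^pi(x) such primes p. *)

(* The descent step divides (X + Y sqrt D) by (X1 + Y1 sqrt D), i.e. multiplies
   by the conjugate X1 - Y1 sqrt D. *)
Lemma pell_descentZ (D X Y X1 Y1 : Z) :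
  (0 < D -> 0 <= X -> 0 <= X1 -> 0 < Y1 <= Y ->
  X ^ 2 = 1 + D * Y ^ 2 -> X1 ^ 2 = 1 + D * Y1 ^ 2 ->
  let X2 := X * X1 - D * Y * Y1 in let Y2 := X1 * Y - X * Y1 in
  [/\ 0 <= X2, 0 <= Y2 < Y, X2 ^ 2 = 1 + D * Y2 ^ 2,
      X = X1 * X2 + D * Y1 * Y2 & Y = X1 * Y2 + Y1 * X2])%Z.
Proof.
move=> D_gt0 X_ge0 X1_ge0 [Y1_gt0 leY1Y] E E1 X2 Y2.
have sq_le a b : (0 <= b -> a ^ 2 <= b ^ 2 -> a <= b)%Z by move=> *; nia.
have sq_lt a b : (0 <= b -> a ^ 2 < b ^ 2 -> a < b)%Z by move=> *; nia.
have X2_ge0 : (D * Y * Y1 <= X * X1)%Z.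
  by apply: sq_le; rewrite ?Z.pow_mul_l ?E ?E1; nia.
have Y2_ge0 : (X * Y1 <= X1 * Y)%Z.
  by apply: sq_le; rewrite ?Z.pow_mul_l ?E ?E1; nia.
have Y2_lt : ((X1 - 1) * Y < X * Y1)%Z.
  by apply: sq_lt; rewrite ?Z.pow_mul_l ?E; nia.
have norm_mul : ((X * X1 - D * Y * Y1) ^ 2 - D * (X1 * Y - X * Y1) ^ 2
                = (X ^ 2 - D * Y ^ 2) * (X1 ^ 2 - D * Y1 ^ 2))%Z by ring.
rewrite E E1 in norm_mul.
by split; rewrite /X2 /Y2; nia.
Qed.

Section Pell.

Variable D : nat.
Hypothesis D_gt0 : 0 < D.

(* A pair (X, Y) stands for X + Y sqrt D; pell_mul is the product in Z[sqrt D]. *)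
Definition pell_sol (e : nat * nat) := e.1 ^ 2 = 1 + D * e.2 ^ 2.

Definition pell_mul (e f : nat * nat) :=
  (e.1 * f.1 + D * e.2 * f.2, e.1 * f.2 + e.2 * f.1).

Definition pell_exp (e : nat * nat) (k : nat) := iter k (pell_mul e) (1, 0).

Lemma pell_mulC : commutative pell_mul.
Proof. by move=> [a b] [c d]; rewrite /pell_mul /=; congr pair; lia. Qed.

Lemma pell_mulA : associative pell_mul.
Proof. by move=> [a b] [c d] [u v]; rewrite /pell_mul /=; congr pair; lia. Qed.

Lemma pell_mul1 : left_id (1, 0) pell_mul.
Proof. by move=> [c d]; rewrite /pell_mul /=; congr pair; lia. Qed.

Lemma pell_expS e k : pell_exp e k.+1 = pell_mul e (pell_exp e k).
Proof. by []. Qed.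

Lemma pell_expD e m n : pell_exp e (m + n) = pell_mul (pell_exp e m) (pell_exp e n).
Proof.
by elim: m => [|m IHm]; rewrite ?pell_mul1 // addSn !pell_expS IHm pell_mulA.
Qed.

Lemma pell_expM e m n : pell_exp e (m * n) = pell_exp (pell_exp e m) n.
Proof. by elim: n => [|n IHn]; rewrite ?muln0 // mulnS pell_expD IHn. Qed.

Lemma pell_sol_mul e f : pell_sol e -> pell_sol f -> pell_sol (pell_mul e f).
Proof.
by case: e f => [a b] [c d]; rewrite /pell_sol /pell_mul /= => E F; nia.
Qed.

Lemma pell_sol_exp e k : pell_sol e -> pell_sol (pell_exp e k).
Proof.
move=> sol_e; elim: k => [|k IHk]; first by rewrite /pell_sol /=; lia.
by rewrite pell_expS; apply: pell_sol_mul.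
Qed.

Lemma pell_sol_snd0 e : pell_sol e -> e.2 = 0 -> e = (1, 0).
Proof. by case: e => a b; rewrite /pell_sol /= => E b0; subst b; congr pair; nia. Qed.

Lemma pell_exp_snd_gt0 e k : pell_sol e -> 0 < e.2 -> 0 < k -> 0 < (pell_exp e k).2.
Proof.
move=> sol_e e2_gt0; case: k => // k _; rewrite pell_expS.
have := pell_sol_exp _ k sol_e; case: (pell_exp e k) => a b /=; rewrite /pell_sol /=.
nia.
Qed.

Lemma pell_descent e e1 : pell_sol e -> pell_sol e1 -> 0 < e1.2 <= e.2 ->
  exists2 f, pell_sol f & f.2 < e.2 /\ e = pell_mul e1 f.
Proof.
case: e e1 => [X Y] [X1 Y1]; rewrite /pell_sol /= => E E1 /andP[Y1_gt0 leY1Y].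
have [||||||] := pell_descentZ (Z.of_nat D) (Z.of_nat X) (Z.of_nat Y)
                                (Z.of_nat X1) (Z.of_nat Y1); try lia.
move=> /Z_of_nat_complete[X2 ->] [/Z_of_nat_complete[Y2 ->] Y2_lt].
by exists (X2, Y2); rewrite /pell_sol /pell_mul /=; [|split; [|congr pair]]; lia.
Qed.

Lemma pell_exp1 e : pell_exp e 1 = e.
Proof. by rewrite pell_expS pell_mulC pell_mul1. Qed.

Lemma pell_common_base e e' : pell_sol e -> pell_sol e' -> 0 < e.2 -> 0 < e'.2 ->
  exists g m n,
    [/\ pell_sol g, 0 < g.2, e = pell_exp g m.+1 & e' = pell_exp g n.+1].
Proof.
have [N] := ubnP (e.2 + e'.2); elim: N e e' => // N IHN e e' ltN.
wlog le_e'e : e e' ltN / e'.2 <= e.2.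
  move=> base; case: (leqP e'.2 e.2) => [|/ltnW]; first exact: base.
  move=> le sol_e sol_e' e_gt0 e'_gt0; rewrite addnC in ltN.
  by have [g [m [n []]]] := base e' e ltN le sol_e' sol_e e'_gt0 e_gt0; exists g, n, m.
move=> sol_e sol_e' e_gt0 e'_gt0.
have [f sol_f [lt_fe def_e]] : exists2 f, pell_sol f & f.2 < e.2 /\ e = pell_mul e' f.
  by apply: pell_descent; rewrite ?e'_gt0.
have [f0 | f_gt0] := posnP f.2.
  exists e', 0, 0; split=> //; last by rewrite pell_exp1.
  by rewrite def_e (pell_sol_snd0 _ sol_f f0) pell_mulC pell_mul1 pell_exp1.
have [|g [m [n [sol_g g_gt0 def_f def_e']]]] := IHN f e' _ sol_f sol_e' f_gt0 e'_gt0.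
  by lia.
by exists g, (n + m).+1, n; split; rewrite // def_e def_f def_e' -pell_expD addSn addnS.
Qed.

Lemma pell_exp_form U V k : exists a b,
  pell_exp (U, V) k = (U ^ k + D * a, V * (k * U ^ k.-1 + D * b)).
Proof.
elim: k => [|k [a [b IHk]]]; first by exists 0, 0; rewrite /= !muln0 addn0.
exists (U * a + V * (V * (k * U ^ k.-1 + D * b))), (U * b + a).
rewrite pell_expS IHk /pell_mul /= expnS; congr pair; first lia.
by case: k {IHk} => [|k] /=; rewrite ?expnS; lia.
Qed.

Definition sqdvd_primes (Y : nat) := forall r, prime r -> r %| Y -> r ^ 2 %| D.

Lemma pell_exp_prime_not_sqdvd U V q : pell_sol (U, V) -> 0 < V -> prime q ->
  ~ sqdvd_primes (pell_exp (U, V) q).2.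
Proof.
rewrite /pell_sol /= => E V_gt0 q_pr good.
have [a [b def_e]] := pell_exp_form U V q; rewrite def_e /= in good.
set c := q * U ^ q.-1 + D * b in good.
have q_gt1 := prime_gt1 q_pr.
have c_sqdvd r : prime r -> r %| c -> r ^ 2 %| D.
  by move=> r_pr /(dvdn_mull V); apply: good.
have U_D_coprime r : prime r -> r %| D -> ~~ (r %| U).
  move=> r_pr rD; apply/negP => /(dvdn_exp (isT : 0 < 2)).
  rewrite E dvdn_addl ?dvdn_mulr // dvdn1 => /eqP r1.
  by rewrite r1 in r_pr.
have U_gt1 : 1 < U by nia.
have q_lt_c : q < c.
  have : 1 < U ^ q.-1 by rewrite -(exp1n q.-1) ltn_exp2r // -ltnS prednK ?prime_gt0.
  by rewrite /c; nia.
have c_q_nat : q.-nat c.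
  apply/(pnatP _ (ltn_trans (prime_gt0 q_pr) q_lt_c)) => r r_pr rc.
  have rD : r %| D by apply: dvdn_trans (c_sqdvd r r_pr rc); rewrite dvdn_exp.
  move: rc; rewrite /c dvdn_addl ?(dvdn_mulr _ rD) // Euclid_dvdM // Euclid_dvdX //.
  by rewrite dvdn_prime2 // (negbTE (U_D_coprime r r_pr rD)) orbF inE.
have [k def_c] := p_natP c_q_nat.
have q_dvd_sq : q %| q ^ 2 by apply: (dvdn_exp2l q (isT : 1 <= 2)).
have qq_c : q ^ 2 %| c.
  by rewrite def_c dvdn_exp2l // -(ltn_exp2l _ _ q_gt1) -def_c expn1.
have qq_D := c_sqdvd q q_pr (dvdn_trans q_dvd_sq qq_c).
move: qq_c; rewrite /c dvdn_addl ?(dvdn_mulr _ qq_D) // expnS expn1.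
rewrite dvdn_pmul2l ?prime_gt0 // Euclid_dvdX // => /andP[qU _].
by case/negP: (U_D_coprime q q_pr (dvdn_trans q_dvd_sq qq_D)).
Qed.

Lemma pell_exp_sqdvd_eq1 g k : pell_sol g -> 0 < g.2 -> 0 < k ->
  sqdvd_primes (pell_exp g k).2 -> k = 1.
Proof.
move=> sol_g g_gt0 k_gt0; apply: contraPeq => k_neq1.
have k_gt1 : 1 < k by lia.
rewrite -(divnK (pdiv_dvd k)) pell_expM.
have k'_gt0 : 0 < k %/ pdiv k by rewrite divn_gt0 ?pdiv_gt0 // dvdn_leq ?pdiv_dvd // ltnW.
have := pell_sol_exp _ (k %/ pdiv k) sol_g.
have := pell_exp_snd_gt0 _ _ sol_g g_gt0 k'_gt0.
case: (pell_exp g _) => U V /= V_gt0 sol_UV.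
exact: pell_exp_prime_not_sqdvd sol_UV V_gt0 (pdiv_prime k_gt1).
Qed.

Lemma pell_sqdvd_unique e e' : pell_sol e -> pell_sol e' -> 0 < e.2 -> 0 < e'.2 ->
  sqdvd_primes e.2 -> sqdvd_primes e'.2 -> e = e'.
Proof.
move=> sol_e sol_e' e_gt0 e'_gt0.
have [g [m [n [sol_g g_gt0 -> ->]]]] := pell_common_base _ _ sol_e sol_e' e_gt0 e'_gt0.
by move=> /pell_exp_sqdvd_eq1-> // /pell_exp_sqdvd_eq1-> //.
Qed.

End Pell.

Definition root_log (e : nat) := (e./2).-1.
Definition core_log (e : nat) := e - (root_log e).*2.

Lemma core_logK e : core_log e + (root_log e).*2 = e.
Proof. have := odd_double_half e; rewrite /core_log /root_log; lia. Qed.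

Lemma core_log_lt4 e : core_log e < 4.
Proof. have := odd_double_half e; rewrite /core_log /root_log; case: odd; lia. Qed.

Lemma core_log_gt1 e : 0 < root_log e -> 1 < core_log e.
Proof. have := odd_double_half e; rewrite /core_log /root_log; lia. Qed.

Lemma prod_prime_exp_gt0 (s : seq nat) (g : nat -> nat) :
  all prime s -> 0 < \prod_(q <- s) q ^ g q.
Proof.
move=> s_pr; rewrite big_seq prodn_cond_gt0 // => q /(allP s_pr) q_pr.
by rewrite expn_gt0 prime_gt0.
Qed.

Lemma logn_prod_prime_exp (s : seq nat) (g : nat -> nat) r :
  prime r -> uniq s -> all prime s ->
  logn r (\prod_(q <- s) q ^ g q) = (r \in s) * g r.
Proof.
move=> r_pr; elim: s => [|q s IHs] /=; first by rewrite big_nil logn1.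
case/andP=> q_notin_s s_uniq /andP[q_pr s_pr].
have qg_gt0 : 0 < q ^ g q by rewrite expn_gt0 prime_gt0.
rewrite big_cons lognM ?prod_prime_exp_gt0 // IHs // lognX logn_prime // in_cons.
have [-> | _] /= := eqVneq r q; first by rewrite (negbTE q_notin_s) muln1 addn0 mul1n.
by rewrite muln0.
Qed.

Lemma logn_prod_primes (f : nat -> nat) n r : f 0 = 0 ->
  logn r (\prod_(q <- primes n) q ^ f (logn q n)) = f (logn r n).
Proof.
move=> f0; have [r_pr | r_npr] := boolP (prime r); last first.
  have logn_r m : logn r m = 0 by rewrite lognE (negbTE r_npr).
  by rewrite !logn_r f0.
rewrite logn_prod_prime_exp ?primes_uniq ?all_prime_primes // -logn_gt0.
by have [-> | _] := posnP (logn r n); rewrite ?f0 ?mul1n.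
Qed.

Definition pell_core n := \prod_(q <- primes n) q ^ core_log (logn q n).
Definition pell_root n := \prod_(q <- primes n) q ^ root_log (logn q n).

Lemma logn_pell_core n r : logn r (pell_core n) = core_log (logn r n).
Proof. exact: logn_prod_primes. Qed.

Lemma logn_pell_root n r : logn r (pell_root n) = root_log (logn r n).
Proof. exact: logn_prod_primes. Qed.

Lemma pell_core_gt0 n : 0 < pell_core n.
Proof. exact/prod_prime_exp_gt0/all_prime_primes. Qed.

Lemma pell_root_gt0 n : 0 < pell_root n.
Proof. exact/prod_prime_exp_gt0/all_prime_primes. Qed.

Lemma pell_core_rootE n : 0 < n -> n = pell_core n * pell_root n ^ 2.
Proof.
move=> n_gt0; apply: eqn_from_log => // [|r].
  by rewrite muln_gt0 expn_gt0 pell_core_gt0 pell_root_gt0.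
rewrite lognM ?expn_gt0 ?pell_core_gt0 ?pell_root_gt0 // lognX.
by rewrite logn_pell_core logn_pell_root mulnC muln2 core_logK.
Qed.

Lemma pell_core_sqdvd n : sqdvd_primes (pell_core n) (pell_root n).
Proof.
move=> r r_pr r_root; rewrite pfactor_dvdn ?pell_core_gt0 // logn_pell_core.
apply: core_log_gt1; rewrite -logn_pell_root logn_gt0 mem_primes r_pr pell_root_gt0.
exact: r_root.
Qed.

Definition core_pattern (P : seq nat) (n : nat) : {ffun 'I_(size P) -> 'I_4} :=
  [ffun i : 'I_(size P) => Ordinal (core_log_lt4 (logn (nth 0 P i) n))].

Lemma core_pattern_inj (P : seq nat) n n' :
  {subset primes n <= P} -> {subset primes n' <= P} ->
  core_pattern P n = core_pattern P n' -> pell_core n = pell_core n'.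
Proof.
move=> sub_n sub_n' eq_pat.
apply: eqn_from_log; rewrite ?pell_core_gt0 // => r; rewrite !logn_pell_core.
have [r_P | r_notP] := boolP (r \in P).
  have r_idx : index r P < size P by rewrite index_mem.
  have /ffunP/(_ (Ordinal r_idx))/(congr1 val) := eq_pat.
  by rewrite !ffunE /= nth_index.
have logn0 m : {subset primes m <= P} -> logn r m = 0.
  move=> sub_m; apply/eqP; rewrite -leqn0 leqNgt logn_gt0.
  by apply: contra r_notP => /sub_m.
by rewrite !logn0.
Qed.

Lemma prime_sqr_pred_gt0 p : prime p -> 0 < p ^ 2 - 1.
Proof. by move=> /prime_gt1 p_gt1; rewrite subn_gt0 -(exp1n 2) ltn_exp2r. Qed.

Lemma prime_eq_of_pell_core p p' : prime p -> prime p' ->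
  pell_core (p ^ 2 - 1) = pell_core (p' ^ 2 - 1) -> p = p'.
Proof.
have pell_sol_prime m : prime m ->
    pell_sol (pell_core (m ^ 2 - 1)) (m, pell_root (m ^ 2 - 1)).
  move=> m_pr; rewrite /pell_sol /= -pell_core_rootE ?prime_sqr_pred_gt0 //.
  by rewrite subnKC // expn_gt0 prime_gt0.
move=> p_pr p'_pr eq_core.
have sol_p' := pell_sol_prime p' p'_pr; have sqdvd_p' := pell_core_sqdvd (p' ^ 2 - 1).
rewrite -eq_core in sol_p' sqdvd_p'.
by have [] := pell_sqdvd_unique _ (pell_core_gt0 _) _ _ (pell_sol_prime p p_pr) sol_p'
  (pell_root_gt0 _) (pell_root_gt0 _) (pell_core_sqdvd _) sqdvd_p'.
Qed.

Lemma le_rfloor (x : R) (m : nat) : Rle (INR m) x -> m <= Z.to_nat (rfloor x).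
Proof.
move=> le_mx; have [lt_x_up _] := archimed x.
have : (Z.of_nat m < up x)%Z.
  by apply: lt_IZR; rewrite -INR_IZR_INZ; apply: Rle_lt_trans le_mx lt_x_up.
by rewrite /rfloor; lia.
Qed.

Definition primes_upto (x : R) := [seq q <- iota 0 (Z.to_nat (rfloor x)).+1 | prime q].

Lemma size_primes_upto x : size (primes_upto x) = primepi x.
Proof. by rewrite size_filter. Qed.

Lemma primes_sub_upto n x :
  Rle (INR (largest_pdiv n)) x -> {subset primes n <= primes_upto x}.
Proof.
move=> le_x q q_n; have := q_n; rewrite mem_primes => /andP[q_pr _].
rewrite mem_filter q_pr mem_iota ltnS /= le_rfloor //.
exact/(Rle_trans _ _ _ (le_INR _ _ (leP (max_pdiv_max q_n)))).
Qed.

Lemma uniq_size_le_card (T : eqType) (rT : finType) (f : T -> rT) (s : seq T) :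
  uniq s -> {in s &, injective f} -> size s <= #|rT|.
Proof.
move=> s_uniq f_inj; rewrite -(size_map f) -(card_uniqP _); first exact: max_card.
by rewrite map_inj_in_uniq.
Qed.

Theorem proposition8p7 (x : R) (s : seq nat) :
  uniq s ->
  (forall p, p \in s -> prime p /\ Rle (INR (largest_pdiv (p ^ 2 - 1))) x) ->
  size s <= 3 * 7 ^ (1 + 2 * primepi x).
Proof.
move=> s_uniq s_small.
have prime_s p : p \in s -> prime p by case/s_small.
have sub_upto p : p \in s -> {subset primes (p ^ 2 - 1) <= primes_upto x}.
  by case/s_small => _ /primes_sub_upto.
have pattern_inj :
    {in s &, injective (fun p => core_pattern (primes_upto x) (p ^ 2 - 1))}.
  move=> p p' p_s p'_s /core_pattern_inj eq_core.
  apply: prime_eq_of_pell_core (prime_s p p_s) (prime_s p' p'_s) _.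
  exact: eq_core (sub_upto p p_s) (sub_upto p' p'_s).
have := uniq_size_le_card _ _ _ _ s_uniq pattern_inj.
rewrite card_ffun !card_ord size_primes_upto; set k := primepi x => size_s.
apply: (leq_trans size_s); apply: leq_trans (leq_pmull _ (isT : 0 < 3)).
apply: (@leq_trans (4 ^ (1 + 2 * k))); first by rewrite leq_exp2l //; lia.
by rewrite leq_exp2r.
Qed.
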